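(* Let $\Phi(t)$ be a motion of the toy top with Cayley–Klein parameters $\alpha,\beta,\gamma,\delta$, let $c=2s\alpha\beta=\rho e^{i\phi}$ be the trajectory of the tip in polar form (so $\rho=s\sqrt{1-u^2}$), and let $u,w,e_4,w_{\pm1}$ be as in the context. At every time at which $-1<u<1$, $$i\,\phi'(t)=\frac12\,\frac{u^2-e_4^2}{1-e_4^2}\left(\frac{w_{-1}}{u+1}-\frac{w_{+1}}{u-1}\right)\frac{u'}{w}.$$
   Context: $\mathrm{SU}(2)$: complex $2\times2$ matrices $\begin{pmatrix}\alpha&\beta\\ \gamma&\delta\end{pmatrix}$ with $\alpha\delta-\beta\gamma=1$, $\delta=\bar\alpha$, $\gamma=-\bar\beta$; $\mathrm{su}(2)\cong\mathbb{R}^3$ via $(x_1,x_2,x_3)\mapsto\frac12\begin{pmatrix}ix_3&-x_2+ix_1\\ x_2+ix_1&-ix_3\end{pmatrix}$, $[x,y]=xy-yx$, $\langle x,y\rangle=-2\mathrm{Tr}(xy)$, $k=\frac12\mathrm{diag}(i,-i)$. Toy top parameters: $A,C>0$ moments of inertia (perpendicular axis through center of mass, symmetry axis), $s>0$ tip-to-center-of-mass distance, $p>0$ equal to $s$ times mass, gravity $1$. For a curve $\Phi(t)$: $\omega=\Phi'\Phi^{-1}$, $r=\Phi k\Phi^{-1}$, $T=\frac12A\langle\omega,\omega\rangle+\frac12(C-A)\langle\omega,r\rangle^2+\frac12ps\langle[r,k],\omega\rangle^2$, $V=p\langle r,k\rangle$, $m=A\omega+(C-A)\langle\omega,r\rangle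 r+ps\langle[r,k],\omega\rangle[r,k]$, $DL=(C-A)\langle\omega,r\rangle[r,\omega]+ps\langle[r,k],\omega\rangle[r,[k,\omega]]+p[r,k]$. A motion is a solution of $m'=[\omega,m]+DL$, $\Phi'=\omega\Phi$, with first integrals $h=T+V$, $l=\langle m,k\rangle$, $n=\langle m,r\rangle$; $u=\langle r,k\rangle$. Let $e_1\le e_2\le e_3$ be the roots of $\frac1p(1-u^2)(h-\frac{n^2}{2C}-pu)-\frac1{2Ap}(l-nu)^2$, $e_4=\sqrt{1+A/(ps)}$, $R(u)=(u-e_1)(u-e_2)(u-e_3)(u^2-e_4^2)$, $w(t)=-i\sqrt{s/2}(u^2-e_4^2)u'(t)$ (so $w^2=R(u)$), with $u'/w$ meaning $i\sqrt{2/s}/(u^2-e_4^2)$. The constants $w_{\pm1}$ are the square roots of $R(\pm1)$ given by $w_{\pm1}=\sqrt{s/2}\,(1-e_4^2)\,(l\mp n)/A$. The plane of the tip is identified with $\mathbb{C}$ via $(x_1,x_2)\mapsto x_1+ix_2$ (horizontal fixed-frame coordinates), $c$ being the projection of $-s r$; $\phi$ is a continuous choice of argument of $c$ on time intervals where $c\ne0$. *)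

From Stdlib Require Import Reals.
From Coquelicot Require Import Coquelicot.
Open Scope R_scope.

Record M2 := mkM2 { m11 : C; m12 : C; m21 : C; m22 : C }.

Definition Madd (x y : M2) : M2 :=
  mkM2 (Cplus (m11 x) (m11 y)) (Cplus (m12 x) (m12 y))
       (Cplus (m21 x) (m21 y)) (Cplus (m22 x) (m22 y)).
Definition Mscale (a : R) (x : M2) : M2 :=
  mkM2 (Cmult (RtoC a) (m11 x)) (Cmult (RtoC a) (m12 x))
       (Cmult (RtoC a) (m21 x)) (Cmult (RtoC a) (m22 x)).
Definition Mmul (x y : M2) : M2 :=
  mkM2 (Cplus (Cmult (m11 x) (m11 y)) (Cmult (m12 x) (m21 y)))
       (Cplus (Cmult (m11 x) (m12 y)) (Cmult (m12 x) (m22 y)))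
       (Cplus (Cmult (m21 x) (m11 y)) (Cmult (m22 x) (m21 y)))
       (Cplus (Cmult (m21 x) (m12 y)) (Cmult (m22 x) (m22 y))).
Definition Mdet (x : M2) : C :=
  Cminus (Cmult (m11 x) (m22 x)) (Cmult (m12 x) (m21 x)).
Definition Minv (x : M2) : M2 :=
  let d := Cinv (Mdet x) in
  mkM2 (Cmult d (m22 x)) (Cmult d (Copp (m12 x)))
       (Cmult d (Copp (m21 x))) (Cmult d (m11 x)).
Definition Mtr (x : M2) : C := Cplus (m11 x) (m22 x).

(** SU(2): alpha delta - beta gamma = 1, delta = conj alpha, gamma = - conj beta. *)
Definition inSU2 (x : M2) : Prop :=
  Mdet x = RtoC 1 /\ m22 x = Cconj (m11 x) /\ m21 x = Copp (Cconj (m12 x)).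

Definition su2_of (x1 x2 x3 : R) : M2 :=
  Mscale (1/2) (mkM2 (Cmult Ci (RtoC x3)) (Cplus (RtoC (- x2)) (Cmult Ci (RtoC x1)))
                     (Cplus (RtoC x2) (Cmult Ci (RtoC x1))) (Cmult Ci (RtoC (- x3)))).

(** Lie bracket and inner product <x,y> = -2 Tr(xy) (real on su(2); we take
    the real part, which is the whole value for elements of su(2)). *)
Definition Mbr (x y : M2) : M2 := Madd (Mmul x y) (Mscale (-1) (Mmul y x)).
Definition Minner (x y : M2) : R := Re (Cmult (RtoC (-2)) (Mtr (Mmul x y))).

Definition kk : M2 := su2_of 0 0 1.

Definition Cex_derive (f : R -> C) (t : R) : Prop :=
  ex_derive (fun s => Re (f s)) t /\ ex_derive (fun s => Im (f s)) t.
Definition CDerive (f : R -> C) (t : R) : C :=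
  (Derive (fun s => Re (f s)) t, Derive (fun s => Im (f s)) t).
Definition Mex_derive (F : R -> M2) (t : R) : Prop :=
  Cex_derive (fun s => m11 (F s)) t /\ Cex_derive (fun s => m12 (F s)) t /\
  Cex_derive (fun s => m21 (F s)) t /\ Cex_derive (fun s => m22 (F s)) t.
Definition MDerive (F : R -> M2) (t : R) : M2 :=
  mkM2 (CDerive (fun s => m11 (F s)) t) (CDerive (fun s => m12 (F s)) t)
       (CDerive (fun s => m21 (F s)) t) (CDerive (fun s => m22 (F s)) t).

(** Quantities attached to a curve Phi.  IA, IC = moments of inertia A, C;
    s = tip-to-centre-of-mass distance; p = s * mass; gravity 1. *)
Definition omega (Phi : R -> M2) (t : R) : M2 := Mmul (MDerive Phi t) (Minv (Phi t)).
Definition rr (Phi : R -> M2) (t : R) : M2 := Mmul (Phi t) (Mmul kk (Minv (Phi t))).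

Definition mom (IA IC s p : R) (Phi : R -> M2) (t : R) : M2 :=
  let w := omega Phi t in let r := rr Phi t in
  Madd (Mscale IA w)
   (Madd (Mscale ((IC - IA) * Minner w r) r)
         (Mscale (p * s * Minner (Mbr r kk) w) (Mbr r kk))).

Definition DL (IA IC s p : R) (Phi : R -> M2) (t : R) : M2 :=
  let w := omega Phi t in let r := rr Phi t in
  Madd (Mscale ((IC - IA) * Minner w r) (Mbr r w))
   (Madd (Mscale (p * s * Minner (Mbr r kk) w) (Mbr r (Mbr kk w)))
         (Mscale p (Mbr r kk))).

Definition is_motion (IA IC s p : R) (a b : R) (Phi : R -> M2) : Prop :=
  forall t, a < t < b ->
    inSU2 (Phi t) /\ Mex_derive Phi t /\
    Mex_derive (mom IA IC s p Phi) t /\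
    MDerive (mom IA IC s p Phi) t =
      Madd (Mbr (omega Phi t) (mom IA IC s p Phi t)) (DL IA IC s p Phi t).

Definition l_int (IA IC s p : R) (Phi : R -> M2) (t : R) : R :=
  Minner (mom IA IC s p Phi t) kk.
Definition n_int (IA IC s p : R) (Phi : R -> M2) (t : R) : R :=
  Minner (mom IA IC s p Phi t) (rr Phi t).
Definition uu (Phi : R -> M2) (t : R) : R := Minner (rr Phi t) kk.

Definition e4 (IA s p : R) : R := sqrt (1 + IA / (p * s)).
Definition w_plus1 (IA s l n e : R) : R := sqrt (s / 2) * (1 - e ^ 2) * (l - n) / IA.
Definition w_minus1 (IA s l n e : R) : R := sqrt (s / 2) * (1 - e ^ 2) * (l + n) / IA.

Definition tip (s : R) (Phi : R -> M2) (t : R) : C :=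
  Cmult (RtoC (2 * s)) (Cmult (m11 (Phi t)) (m12 (Phi t))).
Definition rho (s : R) (Phi : R -> M2) (t : R) : R := s * sqrt (1 - (uu Phi t) ^ 2).
Definition expi (x : R) : C := (cos x, sin x).

From Stdlib Require Import Reals Lra.
From Coquelicot Require Import Coquelicot.
Open Scope R_scope.

(* With the Cayley-Klein parameters alpha = m11 Phi, beta = m12 Phi one has
   u = |alpha|^2 - |beta|^2 and c = 2 s alpha beta, so
   phi' = Im (c'/c) = Im (alpha'/alpha) + Im (beta'/beta).  On the other side,
   [r,k] is orthogonal to r and k, so only the term A omega of m contributes to
   l - n u = <m, k - u r>, giving l - n u = A (<omega,k> - u <omega,r>); written
   in alpha, beta this is A (1 - u^2) (Im (alpha'/alpha) + Im (beta'/beta)),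
   because 1 - u^2 = 4 |alpha|^2 |beta|^2.  Hence phi' = (l - n u) / (A (1 - u^2)),
   which is the stated formula once w_{+1} and w_{-1} are substituted.  Only
   Phi(t) in SU(2) and its differentiability are used, not the equations of
   motion. *)

Definition Cnorm2 (z : C) : R := Re z ^ 2 + Im z ^ 2.

Definition su2_mat (al be : C) : M2 := mkM2 al be (Copp (Cconj be)) (Cconj al).

Ltac destruct_M2 x :=
  let a := fresh "a" in let a' := fresh "a" in let b := fresh "b" in
  let b' := fresh "b" in let c := fresh "c" in let c' := fresh "c" in
  let d := fresh "d" in let d' := fresh "d" in
  destruct x as [[a a'] [b b'] [c c'] [d d']].

Lemma Minner_Madd_l x y z : Minner (Madd x y) z = Minner x z + Minner y z.
Proof.
  destruct_M2 x; destruct_M2 y; destruct_M2 z; unfold Minner, Mtr, Mmul, Madd; simpl; ring.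
Qed.

Lemma Minner_Mscale_l a x z : Minner (Mscale a x) z = a * Minner x z.
Proof. destruct_M2 x; destruct_M2 z; unfold Minner, Mtr, Mmul, Mscale; simpl; ring. Qed.

Lemma Minner_Mbr_l x y : Minner (Mbr x y) x = 0.
Proof. destruct_M2 x; destruct_M2 y; unfold Minner, Mtr, Mmul, Mbr, Madd, Mscale; simpl; ring. Qed.

Lemma Minner_Mbr_r x y : Minner (Mbr x y) y = 0.
Proof. destruct_M2 x; destruct_M2 y; unfold Minner, Mtr, Mmul, Mbr, Madd, Mscale; simpl; ring. Qed.

Lemma l_int_sub_n_int_uu IA IC s p Phi t :
  Minner (rr Phi t) (rr Phi t) = 1 ->
  l_int IA IC s p Phi t - n_int IA IC s p Phi t * uu Phi t =
  IA * (Minner (omega Phi t) kk - uu Phi t * Minner (omega Phi t) (rr Phi t)).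
Proof.
  intros Hrr; unfold l_int, n_int, uu, mom; cbv zeta.
  rewrite !Minner_Madd_l, !Minner_Mscale_l, Minner_Mbr_l, Minner_Mbr_r, Hrr; ring.
Qed.

Lemma inSU2_su2_mat X : inSU2 X -> X = su2_mat (m11 X) (m12 X).
Proof. intros [_ [H22 H21]]; destruct X; simpl in *; subst; reflexivity. Qed.

Lemma inSU2_Minv X : inSU2 X -> Minv X = su2_mat (Cconj (m11 X)) (Copp (m12 X)).
Proof.
  intros [Hdet [H22 H21]]; unfold Minv; rewrite Hdet.
  replace (Cinv (RtoC 1)) with (RtoC 1) by (unfold Cinv, RtoC; simpl; f_equal; field).
  destruct X as [[a a'] [b b'] c d]; simpl in *; subst.
  unfold su2_mat, Cmult, Cconj, Copp, RtoC; simpl; f_equal; f_equal; ring.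
Qed.

Lemma inSU2_Cnorm2 X : inSU2 X -> Cnorm2 (m11 X) + Cnorm2 (m12 X) = 1.
Proof.
  intros HX; pose proof (inSU2_su2_mat X HX) as E; destruct HX as [Hdet _].
  rewrite E in Hdet; apply (f_equal fst) in Hdet.
  destruct X as [[a a'] [b b'] c d]; unfold Mdet, su2_mat in Hdet; simpl in *.
  unfold Cnorm2; simpl; lra.
Qed.

Definition su2_conj (al be : C) (x : M2) : M2 :=
  Mmul (su2_mat al be) (Mmul x (su2_mat (Cconj al) (Copp be))).

Lemma Minner_su2_conj_kk al be : Minner (su2_conj al be kk) kk = Cnorm2 al - Cnorm2 be.
Proof.
  destruct al, be; unfold su2_conj, Cnorm2, su2_mat, Minner, Mtr, Mmul, kk, su2_of, Mscale.
  simpl; field.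
Qed.

Lemma Minner_su2_conj_self al be :
  Cnorm2 al + Cnorm2 be = 1 -> Minner (su2_conj al be kk) (su2_conj al be kk) = 1.
Proof.
  intros Hnorm; transitivity ((Cnorm2 al + Cnorm2 be) ^ 2); [|rewrite Hnorm; ring].
  destruct al, be; unfold su2_conj, Cnorm2, su2_mat, Minner, Mtr, Mmul, kk, su2_of, Mscale.
  simpl; field.
Qed.

Lemma Minner_transverse al be al' be' :
  Cnorm2 al + Cnorm2 be = 1 ->
  let r := su2_conj al be kk in
  let w := Mmul (su2_mat al' be') (su2_mat (Cconj al) (Copp be)) in
  Minner w kk - Minner r kk * Minner w r =
  4 * (Cnorm2 be * Im (al' * Cconj al) + Cnorm2 al * Im (be' * Cconj be)).
Proof.
  intros Hnorm r w; unfold r; rewrite Minner_su2_conj_kk.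
  set (P := Cnorm2 al) in *; set (Q := Cnorm2 be) in *.
  set (A := Im (al' * Cconj al)); set (B := Im (be' * Cconj be)).
  transitivity (2 * (A + B) * (1 - (P - Q) ^ 2) + 4 * (P - Q) * (P * B - Q * A)).
  - destruct al, be, al', be';
      unfold w, su2_conj, P, Q, A, B, Cnorm2, su2_mat, Minner, Mtr, Mmul, kk, su2_of, Mscale.
    simpl; field.
  - replace Q with (1 - P) by lra; ring.
Qed.

Definition Cis_derive (f : R -> C) (t : R) (l : C) : Prop :=
  is_derive (fun x => Re (f x)) t (Re l) /\ is_derive (fun x => Im (f x)) t (Im l).

Lemma Cis_derive_CDerive f t : Cex_derive f t -> Cis_derive f t (CDerive f t).
Proof. intros [Hr Hi]; split; apply Derive_correct; assumption. Qed.

Lemma Cis_derive_const (k : C) t : Cis_derive (fun _ => k) t 0%C.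
Proof. split; simpl; apply (is_derive_const (V := R_NormedModule)). Qed.

Lemma Cis_derive_mult f g t f' g' :
  Cis_derive f t f' -> Cis_derive g t g' ->
  Cis_derive (fun x => f x * g x)%C t (f' * g t + f t * g')%C.
Proof.
  intros [Hfr Hfi] [Hgr Hgi]; split.
  - replace (Re (f' * g t + f t * g'))
      with (Re f' * Re (g t) + Re (f t) * Re g' - (Im f' * Im (g t) + Im (f t) * Im g'))
      by (unfold Re, Im; simpl; ring).
    apply (is_derive_minus (fun x => Re (f x) * Re (g x)) (fun x => Im (f x) * Im (g x)));
      apply (is_derive_mult (K := R_AbsRing)); auto using Rmult_comm.
  - replace (Im (f' * g t + f t * g'))
      with (Re f' * Im (g t) + Re (f t) * Im g' + (Im f' * Re (g t) + Im (f t) * Re g'))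
      by (unfold Re, Im; simpl; ring).
    apply (is_derive_plus (fun x => Re (f x) * Im (g x)) (fun x => Im (f x) * Re (g x)));
      apply (is_derive_mult (K := R_AbsRing)); auto using Rmult_comm.
Qed.

Lemma MDerive_su2_mat Phi t :
  locally t (fun x => inSU2 (Phi x)) ->
  MDerive Phi t = su2_mat (CDerive (fun x => m11 (Phi x)) t) (CDerive (fun x => m12 (Phi x)) t).
Proof.
  intros HSU; unfold MDerive, su2_mat, CDerive, Cconj, Copp; simpl.
  rewrite Ropp_involutive, <- !Derive_opp.
  f_equal; f_equal; apply Derive_ext_loc; revert HSU; apply filter_imp;
    intros x [_ [H22 H21]]; rewrite ?H22, ?H21; unfold Re, Im, Cconj, Copp; simpl; ring.
Qed.

Lemma atan_rotated_polar (r x th : R) :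
  0 < r -> Rabs (x - th) < PI / 2 ->
  let z := (RtoC r * expi x * Cconj (expi th))%C in th + atan (Im z / Re z) = x.
Proof.
  intros Hr Hd z.
  apply Rabs_def2 in Hd.
  assert (Hz : Re z = r * cos (x - th) /\ Im z = r * sin (x - th)).
  { rewrite cos_minus, sin_minus; unfold z, expi, RtoC, Cconj, Cmult, Re, Im; simpl; split; ring. }
  assert (Hcos : 0 < cos (x - th)) by (apply cos_gt_0; lra).
  destruct Hz as [-> ->].
  replace (r * sin (x - th) / (r * cos (x - th))) with (tan (x - th)) by (unfold tan; field; lra).
  rewrite atan_tan by lra; ring.
Qed.

Lemma is_derive_atan_ratio (g h : R -> R) t g' h' :
  is_derive g t g' -> is_derive h t h' -> g t = 0 -> h t <> 0 ->
  is_derive (fun x => atan (g x / h x)) t (g' / h t).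
Proof.
  intros Hg Hh Hg0 Hh0.
  assert (Hq : is_derive (fun x => g x / h x) t ((g' * h t - g t * h') / h t ^ 2))
    by (apply is_derive_div; assumption).
  pose proof (is_derive_comp atan _ t _ _ (is_derive_atan _) Hq) as Ha.
  replace (g' / h t) with (scal ((g' * h t - g t * h') / h t ^ 2) (/ (1 + (g t / h t)²))).
  - exact Ha.
  - rewrite Hg0; unfold scal; simpl; unfold mult; simpl; unfold Rsqr; field; exact Hh0.
Qed.

Lemma is_derive_polar_angle (c : R -> C) (r phi : R -> R) t c' :
  locally t (fun x => c x = (RtoC (r x) * expi (phi x))%C /\ 0 < r x) ->
  continuous phi t -> Cis_derive c t c' ->
  is_derive phi t (Im (c' * Cconj (c t)) / Cnorm2 (c t)).
Proof.
  intros Hpol Hphi Hc.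
  set (e := Cconj (expi (phi t))).
  destruct (locally_singleton _ _ Hpol) as [Hct Hrt].
  destruct (Cis_derive_mult _ _ _ _ _ Hc (Cis_derive_const e t)) as [Hzr Hz].
  (* Rotated by -phi t, c stays in the right half-plane near t,
     where its angle is atan (Im/Re). *)
  assert (Hnear : locally t (fun x => phi t + atan (Im (c x * e) / Re (c x * e)) = phi x)).
  { pose proof (Hphi _ (locally_ball (phi t) (mkposreal _ PI2_RGT_0))) as Hball.
    generalize (filter_and _ _ Hpol Hball); apply filter_imp.
    intros x [[Hcx Hrx] Hbx]; rewrite Hcx.
    apply atan_rotated_polar; [exact Hrx | exact Hbx]. }
  assert (Hsc : cos (phi t) ^ 2 + sin (phi t) ^ 2 = 1)
    by (rewrite <- (sin2_cos2 (phi t)); unfold Rsqr; ring).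
  assert (Hre : Re (c t * e) = r t).
  { rewrite Hct; unfold e, expi, RtoC, Cconj, Cmult, Re, Im; simpl.
    transitivity (r t * (cos (phi t) ^ 2 + sin (phi t) ^ 2)); [ring | rewrite Hsc; ring]. }
  assert (Him : Im (c t * e) = 0).
  { rewrite Hct; unfold e, expi, RtoC, Cconj, Cmult, Re, Im; simpl; ring. }
  assert (Hatan : is_derive (fun x => atan (Im (c x * e) / Re (c x * e))) t
                    (Im (c' * e + c t * 0) / Re (c t * e))).
  { apply (is_derive_atan_ratio (fun x => Im (c x * e)) (fun x => Re (c x * e)) t _
                                 (Re (c' * e + c t * 0)));
      [exact Hz | exact Hzr | exact Him | lra]. }
  pose proof (is_derive_plus _ _ t _ _ (is_derive_const (phi t) t) Hatan) as Hsum.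
  apply (is_derive_ext_loc _ _ _ _ Hnear).
  replace (Im (c' * Cconj (c t)) / Cnorm2 (c t))
    with (plus zero (Im (c' * e + c t * 0) / Re (c t * e))); [exact Hsum |].
  rewrite Hre, Hct; unfold plus, zero; simpl.
  destruct c' as [p q]; unfold Cnorm2, e, expi, RtoC, Cconj, Cmult, Cplus, Re, Im; simpl.
  match goal with |- _ = _ / ?D => replace D with (r t ^ 2) end.
  - field; lra.
  - transitivity (r t ^ 2 * (cos (phi t) ^ 2 + sin (phi t) ^ 2)); [rewrite Hsc |]; ring.
Qed.

Lemma polar_radius_pos (r th : R) (z : C) :
  0 <= r -> z = (RtoC r * expi th)%C -> z <> 0%C -> 0 < r.
Proof.
  intros [Hr | <-] Hz Hnz; [exact Hr |].
  exfalso; apply Hnz; rewrite Hz; unfold Cmult, RtoC; simpl; f_equal; ring.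
Qed.

Lemma Cis_derive_tip s Phi t :
  Mex_derive Phi t ->
  Cis_derive (tip s Phi) t
    (RtoC (2 * s) * (CDerive (fun x => m11 (Phi x)) t * m12 (Phi t)
                     + m11 (Phi t) * CDerive (fun x => m12 (Phi x)) t))%C.
Proof.
  intros [Hal [Hbe _]].
  pose proof (Cis_derive_mult _ _ _ _ _ (Cis_derive_CDerive _ _ Hal)
                (Cis_derive_CDerive _ _ Hbe)) as Hprod.
  destruct (Cis_derive_mult _ _ _ _ _ (Cis_derive_const (RtoC (2 * s)) t) Hprod) as [Hr Hi].
  split; [refine (eq_ind _ _ Hr _ _) | refine (eq_ind _ _ Hi _ _)]; unfold Re, Im; simpl; ring.
Qed.

Lemma Im_tip_log_derivative (s : R) (al be al' be' : C) :
  s <> 0 -> Cnorm2 al <> 0 -> Cnorm2 be <> 0 ->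
  let c := (RtoC (2 * s) * (al * be))%C in
  let c' := (RtoC (2 * s) * (al' * be + al * be'))%C in
  Im (c' * Cconj c) / Cnorm2 c =
  (Cnorm2 be * Im (al' * Cconj al) + Cnorm2 al * Im (be' * Cconj be)) / (Cnorm2 al * Cnorm2 be).
Proof.
  intros Hs Hal Hbe c c'.
  replace (Cnorm2 c) with (4 * s ^ 2 * (Cnorm2 al * Cnorm2 be)).
  - replace (Im (c' * Cconj c)) with
      (4 * s ^ 2 * (Cnorm2 be * Im (al' * Cconj al) + Cnorm2 al * Im (be' * Cconj be))).
    + field; auto.
    + destruct al, be, al', be'.
      unfold c, c', Cnorm2, RtoC, Cconj, Cmult, Cplus, Re, Im; simpl; ring.
  - destruct al, be; unfold c, Cnorm2, RtoC, Cmult, Re, Im; simpl; ring.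
Qed.

Lemma is_derive_tip_angle IA IC s p Phi phi t :
  IA <> 0 -> 0 < s ->
  locally t (fun x => inSU2 (Phi x)) -> Mex_derive Phi t ->
  locally t (fun x => tip s Phi x = (RtoC (rho s Phi x) * expi (phi x))%C /\ 0 < rho s Phi x) ->
  continuous phi t -> -1 < uu Phi t < 1 ->
  is_derive phi t
    ((l_int IA IC s p Phi t - n_int IA IC s p Phi t * uu Phi t) / (IA * (1 - uu Phi t ^ 2))).
Proof.
  intros HA Hs HSU HdPhi Hpol Hcont Hu.
  pose proof (locally_singleton _ _ HSU) as HSUt.
  pose proof (is_derive_polar_angle _ _ _ _ _ Hpol Hcont (Cis_derive_tip s Phi t HdPhi)) as Hphi.
  pose proof (inSU2_Cnorm2 _ HSUt) as Hnorm.
  assert (Hrr : rr Phi t = su2_conj (m11 (Phi t)) (m12 (Phi t)) kk).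
  { unfold rr; rewrite (inSU2_Minv _ HSUt), (inSU2_su2_mat _ HSUt) at 1; reflexivity. }
  assert (Homega : omega Phi t =
    Mmul (su2_mat (CDerive (fun x => m11 (Phi x)) t) (CDerive (fun x => m12 (Phi x)) t))
         (su2_mat (Cconj (m11 (Phi t))) (Copp (m12 (Phi t))))).
  { unfold omega; rewrite (inSU2_Minv _ HSUt), (MDerive_su2_mat _ _ HSU); reflexivity. }
  rewrite l_int_sub_n_int_uu by (rewrite Hrr; apply Minner_su2_conj_self, Hnorm).
  unfold uu; rewrite Hrr, Homega, (Minner_transverse _ _ _ _ Hnorm), Minner_su2_conj_kk.
  unfold uu in Hu; rewrite Hrr, Minner_su2_conj_kk in Hu.
  unfold tip in Hphi; rewrite Im_tip_log_derivative in Hphi; try lra.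
  replace (1 - _ ^ 2) with (4 * (Cnorm2 (m11 (Phi t)) * Cnorm2 (m12 (Phi t)))) by
    (replace (Cnorm2 (m12 (Phi t))) with (1 - Cnorm2 (m11 (Phi t))) by lra; ring).
  replace (IA * _ / _) with
    ((Cnorm2 (m12 (Phi t)) * Im (CDerive (fun x => m11 (Phi x)) t * Cconj (m11 (Phi t)))
      + Cnorm2 (m11 (Phi t)) * Im (CDerive (fun x => m12 (Phi x)) t * Cconj (m12 (Phi t))))
     / (Cnorm2 (m11 (Phi t)) * Cnorm2 (m12 (Phi t)))); [exact Hphi |].
  field; repeat split; lra.
Qed.

Lemma e4_sq IA s p : 0 < IA -> 0 < s -> 0 < p -> e4 IA s p ^ 2 = 1 + IA / (p * s).
Proof.
  intros HA Hs Hp; unfold e4; rewrite <- Rsqr_pow2, Rsqr_sqrt; [reflexivity |].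
  assert (0 < IA / (p * s)) by (apply Rdiv_lt_0_compat; [| apply Rmult_lt_0_compat]; lra).
  lra.
Qed.

Lemma w_combination_eq IA s l n e u :
  0 < s -> IA <> 0 -> e ^ 2 <> 1 -> u ^ 2 <> e ^ 2 -> -1 < u < 1 ->
  1 / 2 * ((u ^ 2 - e ^ 2) / (1 - e ^ 2)) *
    (w_minus1 IA s l n e / (u + 1) - w_plus1 IA s l n e / (u - 1)) *
    (sqrt (2 / s) / (u ^ 2 - e ^ 2)) =
  (l - n * u) / (IA * (1 - u ^ 2)).
Proof.
  intros Hs HA He Hue Hu.
  assert (Hsqrt : sqrt (s / 2) * sqrt (2 / s) = 1).
  { rewrite <- sqrt_mult by (apply Rlt_le, Rdiv_lt_0_compat; lra).
    replace (s / 2 * (2 / s)) with 1 by (field; lra); apply sqrt_1. }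
  unfold w_minus1, w_plus1.
  transitivity (sqrt (s / 2) * sqrt (2 / s) * ((l - n * u) / (IA * (1 - u ^ 2)))).
  - field; repeat split; try lra; nra.
  - rewrite Hsqrt; ring.
Qed.

Theorem mainTheorem5 (IA IC s p a b : R) (Phi : R -> M2) (phi : R -> R) (t0 t1 t : R) :
  0 < IA -> 0 < IC -> 0 < s -> 0 < p ->
  is_motion IA IC s p a b Phi ->
  (* phi is a continuous choice of argument of c = rho e^{i phi} on a time
     interval (t0,t1) inside (a,b) on which c <> 0 *)
  a <= t0 -> t1 <= b ->
  (forall x, t0 < x < t1 -> tip s Phi x <> RtoC 0) ->
  (forall x, t0 < x < t1 -> continuous phi x) ->
  (forall x, t0 < x < t1 -> tip s Phi x = Cmult (RtoC (rho s Phi x)) (expi (phi x))) ->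
  t0 < t < t1 ->
  -1 < uu Phi t < 1 ->
  let u := uu Phi t in
  let e := e4 IA s p in
  let l := l_int IA IC s p Phi t in
  let n := n_int IA IC s p Phi t in
  (* u'/w, meaning i sqrt(2/s) / (u^2 - e4^2) *)
  let u'_over_w := Cmult Ci (RtoC (sqrt (2 / s) / (u ^ 2 - e ^ 2))) in
  ex_derive phi t /\
  Cmult Ci (RtoC (Derive phi t)) =
    Cmult (RtoC (1 / 2 * ((u ^ 2 - e ^ 2) / (1 - e ^ 2)) *
                 (w_minus1 IA s l n e / (u + 1) - w_plus1 IA s l n e / (u - 1))))
          u'_over_w.
Proof.
  intros HA HC Hs Hp Hmot Ha0 Hb1 Hnz Hcont Hpol Ht Hu u e l n u'_over_w.
  assert (Hnear : locally t (fun x => t0 < x < t1))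
    by exact (open_and _ _ (open_gt t0) (open_lt t1) t Ht).
  assert (HSU : locally t (fun x => inSU2 (Phi x)))
    by (revert Hnear; apply filter_imp; intros x Hx; apply (Hmot x); lra).
  assert (HdPhi : Mex_derive Phi t) by (apply (Hmot t); lra).
  assert (Hpolar : locally t (fun x =>
            tip s Phi x = (RtoC (rho s Phi x) * expi (phi x))%C /\ 0 < rho s Phi x)).
  { revert Hnear; apply filter_imp; intros x Hx; split; [now apply Hpol |].
    apply (polar_radius_pos _ (phi x) (tip s Phi x)); auto.
    unfold rho; apply Rmult_le_pos; [lra | apply sqrt_pos]. }
  pose proof (is_derive_tip_angle IA IC s p Phi phi t ltac:(lra) Hs HSU HdPhi Hpolar
                (Hcont t Ht) Hu) as Hphi.
  split; [eexists; exact Hphi |].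
  pose proof (e4_sq IA s p HA Hs Hp) as He.
  assert (0 < IA / (p * s)) by (apply Rdiv_lt_0_compat; [| apply Rmult_lt_0_compat]; lra).
  assert (u ^ 2 < 1) by (unfold u; nra).
  subst u e l n u'_over_w.
  rewrite (is_derive_unique _ _ _ Hphi), <- (w_combination_eq IA s _ _ (e4 IA s p))
    by (try rewrite He; lra).
  unfold Cmult, Ci, RtoC; simpl; f_equal; ring.
Qed.
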